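(* Let $\alpha\ge0$ and $n\ge2$ with $n\ge\alpha$, and let $K$ be the event that $\mathscr{G}(n,\alpha/n)$ is connected. Then \[ P_{n,\alpha}(K)\le\Bigl(1-\bigl(1-\tfrac{\alpha}{n}\bigr)^{n-1}\Bigr)^{n-1}. \]
   Context: $\mathscr{G}(n,p)$ is the random graph on vertex set $\{1,\dots,n\}$ in which each of the $\binom n2$ unordered pairs is an edge independently with probability $p$; here $p=\alpha/n$, and $P_{n,\alpha}$ is the corresponding probability measure. *)

From mathcomp Require Import all_boot all_order all_algebra.
From mathcomp Require Import reals.
Set Implicit Arguments. Unset Strict Implicit. Unset Printing Implicit Defensive.
Import Order.TTheory GRing.Theory Num.Theory.
Local Open Scope ring_scope.

(* Unordered pairs {i,j}, i <> j, of vertices of {0,...,n-1}, encoded as (i,j) with i < j. *)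
Definition vpair (n : nat) := {ij : 'I_n * 'I_n | (ij.1 < ij.2)%N}.

Definition graph (n : nat) := {ffun vpair n -> bool}.

Definition adj (n : nat) (g : graph n) : rel 'I_n :=
  fun i j => [exists e : vpair n, g e && ((val e == (i, j)) || (val e == (j, i)))].

Definition connectedb (n : nat) (g : graph n) : bool :=
  [forall i : 'I_n, forall j : 'I_n, connect (adj g) i j].

Definition gnp_weight (R : realType) (n : nat) (p : R) (g : graph n) : R :=
  \prod_(e : vpair n) (if g e then p else 1 - p).

Definition gnp_prob (R : realType) (n : nat) (p : R) (E : pred (graph n)) : R :=
  \sum_(g : graph n | E g) gnp_weight p g.

(* A connected graph has a spanning tree; rooting it at r lets every vertex v <> r
   choose a neighbour f v (its parent) with no 2-cycles, so the edges {v, f v} are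
   distinct.  Put an independent coin on every ordered pair, and let the two
   orientations of a pair share one coin only for the pairs of a set S; for S the set
   of all pairs this is G(n,p).  Decoupling the two orientations of one pair of S does
   not decrease the probability that such a parent map exists: conditionally on the
   other coins, a parent map of the coupled graph that uses the pair in one direction
   survives when the opposite arc is deleted.  With S empty, the events "v has an
   out-neighbour" are independent, of probability 1 - (1 - p)^(n-1) each. *)

From mathcomp Require Import all_boot all_order all_algebra.
From mathcomp Require Import reals.
From mathcomp Require Import ring lra.
Set Implicit Arguments. Unset Strict Implicit. Unset Printing Implicit Defensive.
Import Order.TTheory GRing.Theory Num.Theory.
Local Open Scope ring_scope.

Lemma prodr_natb (R : comPzSemiRingType) (I : finType) (P : pred I) :
  \prod_i ((P i)%:R : R) = ([forall i, P i])%:R.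
Proof.
have [/forallP allP | /forallPn [i /negbTE Pi]] := boolP [forall i, P i].
  by apply: big1 => i _; rewrite allP.
by rewrite (bigD1 i) //= Pi mul0r.
Qed.

Definition fupd (I : finType) (T : Type) (z : {ffun I -> T}) (c : I) (b : T) :=
  [ffun i => if i == c then b else z i].

Section Fupd.
Variables (I : finType) (T : Type).
Implicit Types (z : {ffun I -> T}) (c : I) (b : T).

Lemma fupdE z c b i : fupd z c b i = if i == c then b else z i.
Proof. by rewrite ffunE. Qed.

Lemma fupd_id z c : fupd z c (z c) = z.
Proof. by apply/ffunP=> i; rewrite fupdE; case: eqP => // ->. Qed.

Lemma fupdK z c b b' : fupd (fupd z c b') c b = fupd z c b.
Proof. by apply/ffunP=> i; rewrite !fupdE; case: eqP. Qed.

Lemma fupd_eq z c b : fupd z c b c = b.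
Proof. by rewrite fupdE eqxx. Qed.

End Fupd.

Section Coins.
Variables (R : realFieldType) (p : R).

Definition coin (b : bool) : R := if b then p else 1 - p.

Definition coins (I : finType) (z : {ffun I -> bool}) : R := \prod_i coin (z i).

Definition Ecoin (I : finType) (G : {ffun I -> bool} -> R) : R := \sum_z coins z * G z.

Lemma sum_coin : \sum_b coin b = 1.
Proof. by rewrite big_bool /=; ring. Qed.

Lemma coins_ge0 (I : finType) (z : {ffun I -> bool}) : 0 <= p <= 1 -> 0 <= coins z.
Proof. by case/andP=> p0 p1; apply: prodr_ge0 => i _; rewrite /coin; case: (z i); lra. Qed.

Lemma ler_Ecoin (I : finType) (G1 G2 : {ffun I -> bool} -> R) : 0 <= p <= 1 ->
  (forall z, G1 z <= G2 z) -> Ecoin G1 <= Ecoin G2.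
Proof. by move=> p01 G12; apply: ler_sum => z _; apply: ler_wpM2l; [apply: coins_ge0 |]. Qed.

Lemma Ecoin_prod (I : finType) (F : I -> bool -> R) :
  Ecoin (fun z => \prod_i F i (z i)) = \prod_i \sum_b coin b * F i b.
Proof.
rewrite bigA_distr_bigA; apply: eq_bigr => z _.
by rewrite /coins -big_split.
Qed.

Lemma sum_coins (I : finType) : \sum_(z : {ffun I -> bool}) coins z = 1.
Proof.
rewrite /coins -(bigA_distr_bigA (fun (_ : I) b => coin b)) /=.
by apply: big1 => i _; apply: sum_coin.
Qed.

Lemma coins_fupd (I : finType) (z : {ffun I -> bool}) c b :
  coins (fupd z c b) = coin b * \prod_(i | i != c) coin (z i).
Proof.
rewrite /coins (bigD1 c) //= fupd_eq; congr (_ * _).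
by apply: eq_bigr => i /negbTE ic; rewrite fupdE ic.
Qed.

Lemma sum_ffun_flip (I : finType) (c : I) (H : {ffun I -> bool} -> R) :
  \sum_z H z = \sum_(z : {ffun I -> bool} | z c) (H z + H (fupd z c false)).
Proof.
rewrite big_split /= (bigID (fun z : {ffun I -> bool} => z c)) /=; congr (_ + _).
pose flip (z : {ffun I -> bool}) := fupd z c (~~ z c).
have flipK : involutive flip by move=> z; rewrite /flip fupdK fupd_eq negbK fupd_id.
rewrite (reindex_inj (inv_inj flipK)) /=; apply: eq_big => z.
  by rewrite /flip fupd_eq negbK.
by rewrite /flip fupd_eq negbK => ->.
Qed.

Lemma Ecoin_resample (I : finType) (c : I) (G : {ffun I -> bool} -> R) :
  Ecoin G = Ecoin (fun z => \sum_b coin b * G (fupd z c b)).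
Proof.
rewrite /Ecoin (sum_ffun_flip c) [RHS](sum_ffun_flip c); apply: eq_bigr => z zc.
have zE : fupd z c true = z by rewrite -zc fupd_id.
have coinsE : coins z = coin true * \prod_(i | i != c) coin (z i).
  by rewrite -coins_fupd zE.
rewrite !big_bool /= !fupdK zE coinsE coins_fupd /=; ring.
Qed.

Lemma Ecoin_exists (I : finType) (A : {pred I}) :
  Ecoin (fun z => ([exists i in A, z i])%:R) = 1 - (1 - p) ^+ #|A|.
Proof.
have notE z : ([exists i in A, z i])%:R = 1 - \prod_i (((i \in A) ==> ~~ z i)%:R : R).
  rewrite prodr_natb; have ->: [forall i, (i \in A) ==> ~~ z i] = ~~ [exists i in A, z i].
    by rewrite negb_exists; apply: eq_forallb => i; rewrite negb_and implybE.
  by case: [exists i in A, z i]; rewrite /= ?subr0 ?subrr.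
rewrite /Ecoin; under eq_bigr do rewrite notE mulrBr mulr1.
rewrite sumrB sum_coins.
have := Ecoin_prod (fun i b => ((i \in A) ==> ~~ b)%:R); rewrite /Ecoin => ->.
rewrite -prodr_const [in RHS]big_mkcond /=; congr (_ - _).
apply: eq_bigr => i _; rewrite big_bool /=.
by case: (i \in A); rewrite /= ?mulr0 ?mulr1 ?add0r // addrC subrK.
Qed.

Lemma prod_insub (I : finType) (P : pred I) (J : subFinType P) (F : I -> J -> R) :
  \prod_i oapp (F i) 1 (insub i) = \prod_(j : J) F (val j) j.
Proof.
rewrite (bigID P) /= [X in _ * X]big1 ?mulr1 => [|i /negbTE Pi]; last by rewrite insubF.
rewrite (reindex_omap (val : J -> I) insub) => [|i Pi].
  by apply: eq_big => [j|j _]; rewrite valK // valP eqxx.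
by case: insubP => [u _ <-|]; rewrite ?Pi.
Qed.

Lemma Ecoin_val (I : finType) (P : pred I) (J : subFinType P) (F : {ffun J -> bool} -> R) :
  Ecoin (fun z : {ffun I -> bool} => F [ffun j => z (val j)]) = Ecoin F.
Proof.
have coinsE (g : {ffun J -> bool}) :
    Ecoin (fun z : {ffun I -> bool} => ([ffun j => z (val j)] == g)%:R) = coins g.
  have restrE z : ([ffun j => z (val j)] == g)%:R =
      \prod_i oapp (fun j => (z i == g j)%:R) (1 : R) (insub i).
    rewrite prod_insub prodr_natb; congr (nat_of_bool _)%:R.
    apply/eqP/forallP => [<- j | eq_zg]; first by rewrite ffunE.
    by apply/ffunP => j; rewrite ffunE; apply/eqP.
  rewrite /Ecoin; under eq_bigr do rewrite restrE.
  have := Ecoin_prod (fun i b => oapp (fun j => (b == g j)%:R) 1 (insub i)); rewrite /Ecoin.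
  move=> ->; rewrite /coins -(prod_insub (fun _ j => coin (g j))); apply: eq_bigr => i _.
  case: (insub i) => [j|] /=; last by under eq_bigr do rewrite mulr1; apply: sum_coin.
  by rewrite big_bool /=; case: (g j); rewrite /= ?mulr1 ?mulr0 ?addr0 ?add0r.
have splitF z : F [ffun j => z (val j)] = \sum_g ([ffun j => z (val j)] == g)%:R * F g.
  rewrite (bigD1 [ffun j => z (val j)]) //= eqxx mul1r big1 ?addr0 // => g /negbTE.
  by rewrite eq_sym => ->; rewrite mul0r.
rewrite /Ecoin; under eq_bigr do rewrite splitF mulr_sumr.
rewrite exchange_big /=; apply: eq_bigr => g _.
by rewrite -coinsE /Ecoin mulr_suml; apply: eq_bigr => z _; rewrite mulrA.
Qed.

Lemma Ecoin_rows (I J : finType) (F : I -> {ffun J -> bool} -> R) :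
  Ecoin (fun z : {ffun I * J -> bool} => \prod_i F i [ffun j => z (i, j)]) =
  \prod_i Ecoin (F i).
Proof.
pose uncurry (Z : {ffun I -> {ffun J -> bool}}) : {ffun I * J -> bool} :=
  [ffun ij => Z ij.1 ij.2].
pose curry (z : {ffun I * J -> bool}) := [ffun i => [ffun j => z (i, j)]].
have curryK : cancel curry uncurry by move=> z; apply/ffunP => -[i j]; rewrite !ffunE.
have uncurryK : cancel uncurry curry.
  by move=> Z; apply/ffunP => i; apply/ffunP => j; rewrite !ffunE.
rewrite /Ecoin (reindex uncurry) /=; last first.
  by exists curry => z _; [apply: uncurryK | apply: curryK].
rewrite bigA_distr_bigA; apply: eq_bigr => Z _.
rewrite big_split /=; congr (_ * _).
  by rewrite /coins [RHS]pair_bigA; apply: eq_bigr => -[i j] _; rewrite ffunE.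
by apply: eq_bigr => i _; congr (F i _); apply/ffunP => j; rewrite !ffunE.
Qed.

(* [h x y]: an event with the coin x on an arc and y on its reverse; [w x]: the
   same event when both arcs carry the coin x. *)
Lemma coin2_le (w : bool -> bool) (h : bool -> bool -> bool) : 0 <= p <= 1 ->
    (forall x y x' y', x ==> x' -> y ==> y' -> h x y -> h x' y') ->
    (w false -> h false false) -> (w true -> h true false || h false true) ->
  \sum_y coin y * \sum_x coin x * (w x)%:R <= \sum_y coin y * \sum_x coin x * (h x y)%:R.
Proof.
move=> /andP[p0 p1] h_mono w0 w1; rewrite !big_bool /=.
have h01 := h_mono false false false true isT isT.
have h10 := h_mono false false true false isT isT.
have h11 := h_mono _ _ true true (implybT _) (implybT _).
move: w0 w1 h01 h10 (h11 true false) (h11 false true).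
by case: (w false) (w true) (h false false) (h false true) (h true false) (h true true)
  => [] [] [] [] [] [] //= *; nra.
Qed.

End Coins.

Section ParentMaps.
Variables (V : finType) (r : V).
Implicit Types (S : {set V * V}) (d : V * V -> bool).

Definition shared S (v w : V) := ((v, w) \in S) || ((w, v) \in S).

(* [f (f v) = v] is forbidden only along a pair of S, whose two arcs carry the same
   coin. *)
Definition has_parents S d : bool :=
  [exists f : {ffun V -> V}, [forall v, (v != r) ==>
     [&& f v != v, d (v, f v) & ~~ ((f (f v) == v) && shared S v (f v))]]].

Lemma has_parentsP S d :
  reflect (exists f : V -> V, forall v, v != r ->
             [/\ f v != v, d (v, f v) & ~~ ((f (f v) == v) && shared S v (f v))])
          (has_parents S d).
Proof.
apply: (iffP existsP) => -[f f_ok].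
  by exists f => v vr; move/forallP/(_ v): f_ok; rewrite vr => /and3P.
exists [ffun v => f v]; apply/forallP => v; apply/implyP => vr.
by rewrite !ffunE; apply/and3P; apply: f_ok.
Qed.

Lemma has_parentsW S1 S2 d1 d2 : S2 \subset S1 -> (forall c, d1 c -> d2 c) ->
  has_parents S1 d1 -> has_parents S2 d2.
Proof.
move=> sS d12 /has_parentsP[f f_ok]; apply/has_parentsP; exists f => v vr.
have [fv_v dv no2] := f_ok v vr; split=> //; first exact: d12.
apply: contra no2 => /andP[-> /orP sh]; apply/orP.
by case: sh => [/(subsetP sS) | /(subsetP sS)]; [left | right].
Qed.

Lemma eq_has_parents S d1 d2 : d1 =1 d2 -> has_parents S d1 = has_parents S d2.
Proof. by move=> d12; apply/idP/idP; apply: has_parentsW => // c; rewrite d12. Qed.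

Lemma has_parents_setU1 S a b d : has_parents ((a, b) |: S) d ->
  has_parents S (fun c => d c && (c != (b, a))) ||
  has_parents S (fun c => d c && (c != (a, b))).
Proof.
move=> /has_parentsP[f f_ok].
have sS : S \subset (a, b) |: S by apply: subsetUr.
have drop_edge c0 : (forall v, v != r -> (v, f v) != c0) ->
    has_parents S (fun c => d c && (c != c0)).
  move=> avoid; apply/has_parentsP; exists f => v vr.
  have [fv_v dv no2] := f_ok v vr; split=> //; first by rewrite dv avoid.
  by apply: contra no2 => /andP[-> /orP[] sh]; rewrite /shared !inE sh !orbT.
have [/andP[ar /eqP fab] | not_ab] := boolP ((a != r) && (f a == b)).
  apply/orP; left; apply: drop_edge => v vr; apply/eqP => -[-> fba].
  by have [_ _] := f_ok a ar; rewrite fab fba eqxx /shared !inE eqxx.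
apply/orP; right; apply: drop_edge => v vr; apply/eqP => -[va fvb].
by move: not_ab; rewrite -va vr fvb eqxx.
Qed.

Lemma has_parents_set0 d :
  has_parents set0 d = [forall v, (v != r) ==> [exists w in predC1 v, d (v, w)]].
Proof.
apply/has_parentsP/forallP => [[f f_ok] v | out].
  apply/implyP => vr; have [fv_v dv _] := f_ok v vr.
  by apply/existsP; exists (f v); rewrite !inE fv_v.
pose f v := odflt v [pick w in predC1 v | d (v, w)].
exists f => v vr; rewrite /shared !inE andbF; split=> //;
  rewrite /f; case: pickP => [w /andP[] // | none] /=;
  by move/implyP/(_ vr)/existsP: (out v) => -[w]; rewrite none.
Qed.

Section Distance.
Variable e : rel V.
Hypothesis e_conn : forall v, connect e v r.

Definition path_to_root v k := [exists t : k.-tuple V, path e v t && (last v t == r)].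

Lemma path_to_rootP v k :
  reflect (exists2 s, size s = k & path e v s && (last v s == r)) (path_to_root v k).
Proof.
apply: (iffP existsP) => [[t pt] | [s sk ps]]; first by exists t; rewrite ?size_tuple.
have sk' : size s == k by rewrite sk.
by exists (Tuple sk').
Qed.

Lemma path_to_root_exists v : exists k, path_to_root v k.
Proof.
have /connectP[s ps last_s] := e_conn v.
by exists (size s); apply/path_to_rootP; exists s; rewrite // ps -last_s eqxx.
Qed.

Definition dist v := ex_minn (path_to_root_exists v).

Lemma dist_root : dist r = 0%N.
Proof.
rewrite /dist; case: ex_minnP => m _ min_m; apply/eqP; rewrite -leqn0.
by apply: min_m; apply/path_to_rootP; exists [::]; rewrite //= eqxx.
Qed.

Lemma dist_step v : v != r -> exists2 w, e v w & (dist w < dist v)%N.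
Proof.
move=> vr; rewrite {2}/dist; case: ex_minnP => m /path_to_rootP[[|w s] <- /andP[pws ls]] _.
  by move: vr; rewrite -(eqP ls) eqxx.
case/andP: pws => evw ps; exists w => //; rewrite /dist; case: ex_minnP => m' _ min_m'.
by apply: min_m'; apply/path_to_rootP; exists s => //; apply/andP.
Qed.

Definition parent v := odflt r [pick w | e v w && (dist w < dist v)%N].

Lemma parent_root : parent r = r.
Proof. by rewrite /parent; case: pickP => // w; rewrite dist_root ltn0 andbF. Qed.

Lemma parent_step v : v != r -> e v (parent v) && (dist (parent v) < dist v)%N.
Proof.
move=> vr; rewrite /parent; case: pickP => // none.
by have [w evw lt_w] := dist_step vr; move: (none w); rewrite evw lt_w.
Qed.

End Distance.

Lemma has_parents_connect (e : rel V) S d : (forall v, connect e v r) ->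
  (forall v w, e v w -> d (v, w)) -> has_parents S d.
Proof.
move=> e_conn ed; apply/has_parentsP; exists (parent e_conn) => v vr.
have /andP[evp lt_pv] := parent_step e_conn vr.
have pv_v : parent e_conn v != v by apply: contraTneq lt_pv => ->; rewrite ltnn.
split=> //; first exact: ed.
rewrite negb_and; apply/orP; left.
have [-> | pv_r] := eqVneq (parent e_conn v) r; first by rewrite parent_root eq_sym.
have /andP[_ lt_ppv] := parent_step e_conn pv_r.
by apply: contraTneq (ltn_trans lt_ppv lt_pv) => ->; rewrite ltnn.
Qed.

End ParentMaps.

Section Coupling.
Variables (R : realFieldType) (p : R) (V : finType) (r : V).
Implicit Types (S : {set V * V}) (z : {ffun V * V -> bool}).

(* The directed graph read off the coins z: an arc whose reverse lies in S uses the
   coin of its reverse, so the pairs of S are undirected edges and all other arcs are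
   independent. *)
Definition couple S z (c : V * V) : bool :=
  if (c.2, c.1) \in S then z (c.2, c.1) else z c.

Definition oriented S := {in S, forall c, (c.2, c.1) \notin S}.

Definition parents_prob S := Ecoin p (fun z => (has_parents r S (couple S z))%:R).

Section Step.
Variables (S : {set V * V}) (a b : V).
Hypotheses (ab_S : (a, b) \notin S) (ba_S : (b, a) \notin S) (neq_ab : a != b).

Let resample z x y := fupd (fupd z (b, a) y) (a, b) x.

Let neq_ab_ba : (a, b) != (b, a).
Proof. by rewrite xpair_eqE negb_and neq_ab. Qed.

Let swap_neq (v w u1 u2 : V) : (v, w) != (u1, u2) -> (w, v) != (u2, u1).
Proof. by rewrite !xpair_eqE andbC. Qed.

Lemma couple_resample z x y c :
  couple S (resample z x y) c =
  if c == (a, b) then x else if c == (b, a) then y else couple S z c.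
Proof.
rewrite /couple /resample; case: c => v w /=.
have [[-> ->] | ne_ab] := eqVneq (v, w) (a, b); first by rewrite (negbTE ba_S) fupd_eq.
have [[-> ->] | ne_ba] := eqVneq (v, w) (b, a).
  by rewrite (negbTE ab_S) fupdE eq_sym (negbTE neq_ab_ba) fupd_eq.
by rewrite !fupdE (negbTE ne_ab) (negbTE ne_ba) (negbTE (swap_neq ne_ab))
  (negbTE (swap_neq ne_ba)).
Qed.

Lemma couple_setU1_resample z x y :
  couple ((a, b) |: S) (resample z x y) =1 couple S (resample z x x).
Proof.
move=> [v w]; rewrite [RHS]couple_resample.
have [[-> ->] | ne_ab] := eqVneq (v, w) (a, b).
  by rewrite /couple /= in_setU1 eq_sym (negbTE neq_ab_ba) (negbTE ba_S) fupd_eq.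
have [[-> ->] | ne_ba] := eqVneq (v, w) (b, a); first by rewrite /couple /= setU11 fupd_eq.
have := couple_resample z x y (v, w); rewrite (negbTE ne_ab) (negbTE ne_ba) => <-.
by rewrite /couple /= in_setU1 (negbTE (swap_neq ne_ba)).
Qed.

Lemma parents_prob_setU1_le : 0 <= p <= 1 -> parents_prob ((a, b) |: S) <= parents_prob S.
Proof.
move=> p01; rewrite /parents_prob.
rewrite [X in X <= _](Ecoin_resample p (a, b)) [X in X <= _](Ecoin_resample p (b, a)).
rewrite [X in _ <= X](Ecoin_resample p (a, b)) [X in _ <= X](Ecoin_resample p (b, a)).
apply: ler_Ecoin => // z.
under eq_bigr do under eq_bigr do rewrite (eq_has_parents _ _ (couple_setU1_resample z _ _)).
pose h x y := has_parents r S (couple S (resample z x y)).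
apply: (@coin2_le _ _ (fun x => has_parents r ((a, b) |: S) (couple S (resample z x x))) h p01).
- move=> x y x' y' hx hy; apply: has_parentsW => // c; rewrite !couple_resample.
  by case: ifP => _ //; [apply/implyP | case: ifP => _ //; apply/implyP].
- by apply: has_parentsW => //; apply: subsetUr.
- move/has_parents_setU1/orP => [] hp; apply/orP; [left | right];
    apply: has_parentsW hp => // c /andP[]; rewrite !couple_resample.
  + by case: ifP => // _; case: ifP.
  + by case: ifP.
Qed.

End Step.

Lemma parents_prob_setD1 S c : 0 <= p <= 1 -> oriented S -> c \in S ->
  parents_prob S <= parents_prob (S :\ c).
Proof.
move=> p01 orS; case: c => a b Sab.
have ba_S : (b, a) \notin S := orS _ Sab.
have neq_ab : a != b by apply: contraNneq ba_S => ab; move: Sab; rewrite ab.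
rewrite -{1}(setD1K Sab); apply: parents_prob_setU1_le => //; first by rewrite setD11.
by rewrite !inE negb_and ba_S orbT.
Qed.

Lemma parents_prob_le_set0 S : 0 <= p <= 1 -> oriented S ->
  parents_prob S <= parents_prob set0.
Proof.
move=> p01; move: {2}#|S| (erefl #|S|) => k; elim: k S => [|k IH] S cardS orS.
  by move/eqP: cardS; rewrite cards_eq0 => /eqP ->.
have /set0Pn[c Sc] : S != set0 by rewrite -card_gt0 cardS.
apply: le_trans (parents_prob_setD1 p01 orS Sc) (IH _ _ _).
  by apply/eqP; rewrite -eqSS -cardS (cardsD1 c S) Sc.
by move=> d; rewrite !inE => /andP[_ dS]; rewrite negb_and orS ?orbT.
Qed.

Lemma parents_prob_set0 : parents_prob set0 = (1 - (1 - p) ^+ #|V|.-1) ^+ #|V|.-1.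
Proof.
pose F v (row : {ffun V -> bool}) := (((v != r) ==> [exists w in predC1 v, row w])%:R : R).
transitivity (Ecoin p (fun z => \prod_v F v [ffun w => z (v, w)])).
  rewrite /parents_prob /Ecoin; apply: eq_bigr => z _; congr (_ * _).
  have couple0 : couple set0 z =1 z by move=> c; rewrite /couple in_set0.
  rewrite prodr_natb (eq_has_parents _ _ couple0) has_parents_set0.
  congr (nat_of_bool _)%:R; apply: eq_forallb => v; congr (_ ==> _).
  by apply: eq_existsb => w; rewrite ffunE.
rewrite Ecoin_rows (bigD1 r) //= {1}/F eqxx /=.
have -> : Ecoin p (fun _ : {ffun V -> bool} => 1) = 1.
  by rewrite /Ecoin; under eq_bigr do rewrite mulr1; apply: sum_coins.
rewrite mul1r -(cardC1 r) -prodr_const; apply: eq_bigr => v vr.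
by rewrite /F vr cardC1 -(cardC1 v) -Ecoin_exists.
Qed.

End Coupling.

Lemma gnp_probE (R : realType) n (p : R) (E : pred (graph n)) :
  gnp_prob p E = Ecoin p (fun g => (E g)%:R).
Proof.
rewrite /gnp_prob big_mkcond; apply: eq_bigr => g _.
by case: (E g); rewrite ?mulr1 ?mulr0.
Qed.

Definition upper n : {set 'I_n * 'I_n} := [set c : 'I_n * 'I_n | (c.1 < c.2)%N].

Lemma oriented_upper n : oriented (upper n).
Proof. by move=> [i j]; rewrite !inE /= => lt_ij; rewrite -leqNgt ltnW. Qed.

Lemma adj_couple n (z : {ffun 'I_n * 'I_n -> bool}) v w :
  adj [ffun e : vpair n => z (val e)] v w -> couple (upper n) z (v, w).
Proof.
case/existsP => -[[i j] /= lt_ij] /andP[]; rewrite ffunE /couple inE /=.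
by move=> zij /orP[] /eqP[<- <-]; rewrite ?lt_ij // ltnNge ltnW.
Qed.

Theorem lemma3p3 (R : realType) (n : nat) (alpha : R) :
  0 <= alpha -> (2 <= n)%N -> alpha <= n%:R ->
  gnp_prob (alpha / n%:R) (@connectedb n) <=
    (1 - (1 - alpha / n%:R) ^+ (n - 1)) ^+ (n - 1).
Proof.
move=> alpha_ge0 n_ge2 alpha_le_n.
have n_gt0 : (0 < n)%N by apply: leq_trans n_ge2.
have p01 : 0 <= alpha / n%:R <= 1.
  by rewrite divr_ge0 ?ler0n //= ler_pdivrMr ?ltr0n // mul1r.
pose r : 'I_n := Ordinal n_gt0.
rewrite gnp_probE -(Ecoin_val _ (J := vpair n)) subn1.
apply: (@le_trans _ _ (parents_prob (alpha / n%:R) r (upper n))).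
  apply: ler_Ecoin => // z; have [conn_z | _] := boolP (connectedb _); last exact: ler0n.
  have conn_r v : connect (adj [ffun e => z (val e)]) v r.
    by move/forallP/(_ v)/forallP: conn_z; apply.
  by rewrite (has_parents_connect _ conn_r (@adj_couple n z)).
apply: le_trans (parents_prob_le_set0 r p01 (@oriented_upper n)) _.
by rewrite parents_prob_set0 card_ord.
Qed.
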